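(* Let $t,w,x,y,z\in \mathbb{Z}^+$, let $r=0.8$ and $c=1/(8^r-6^r)\approx 0.922$. Then: (i) If $x\geq 8.956z$ and $y\geq 1.036z$ then $x^r+y^r\geq (x+y+z)^r$. (ii) If $x\leq 10.174y$ then $cx^r+y^r\geq(x+y)^r$. (iii) If $0.5y\leq x\leq 8.884y$ then $x^r+y^r\geq (1+1/10.174)^r(x+y)^r$. (iv) If $z<1.98(t+w+x+y)$ and $0<t\leq2.072\cdot\min\{w/1.036, x,y,z/5.884\}$ then $w^r+x^r+y^r+cz^r\geq(t+w+x+y+z)^r$. (v) If $w\leq \min\{x,y,z\}$ then $cx^r+y^r+z^r\geq c(w+x+y+z)^r$. (vi) If $x\geq 6z$ and $y\geq z$ then $cx^r+y^r\geq c(x+y+z)^r$.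
   Context: $\mathbb{Z}^+$ denotes the set of non-negative integers. *)

(* real powers via powR (a `^ b), with 0 `^ b = 0 for b <> 0. *)
From HB Require Import structures.
From mathcomp Require Import all_boot all_order all_algebra.
From mathcomp Require Import all_classical all_reals all_analysis.
Set Implicit Arguments. Unset Strict Implicit. Unset Printing Implicit Defensive.
Import Order.TTheory GRing.Theory Num.Theory.
Local Open Scope ring_scope.

Definition rexp (R : realType) : R := 4%:R / 5%:R.
Definition cconst (R : realType) : R := 1 / (8%:R `^ rexp R - 6%:R `^ rexp R).
Definition dec3 (R : realType) (m : nat) : R := m%:R / 1000%:R.

From HB Require Import structures.
From mathcomp Require Import all_boot all_order all_algebra.
From mathcomp Require Import all_classical all_reals all_analysis.
From mathcomp Require Import ring lra.
Import Order.TTheory GRing.Theory Num.Theory.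
Set Implicit Arguments. Unset Strict Implicit. Unset Printing Implicit Defensive.
Local Open Scope ring_scope.

(* For 0 < r < 1 the map x |-> x^r is concave, so F(v) := sum_i c_i v_i^r is
   concave and homogeneous of degree r on the nonnegative orthant, while
   K (sum_i v_i)^r only depends on the coordinate sum.  Rescaling finitely many
   vectors u_j to a common coordinate sum and applying Jensen's inequality shows
   that the set of v >= 0 with K (sum_i v_i)^r <= F(v) is a convex cone.  In each
   part of the lemma the hypotheses cut out a polyhedral cone, so the inequality
   only has to be checked on its extreme rays; for r = 4/5 these checks are
   inequalities between powers of explicit rationals, certified by comparing
   fifth powers with fourth powers. *)

Section ConcavePower.
Variables (R : realType) (r : R).
Hypotheses (r_gt0 : 0 < r) (r_lt1 : r < 1).

Lemma powR_le_tangent (t : R) : 0 <= t -> t `^ r <= r * t + (1 - r).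
Proof.
(* Young's inequality for t ^ r and 1 with the conjugate exponents 1/r, 1/(1-r). *)
move=> t0; have r1 : 0 < 1 - r by rewrite subr_gt0.
have pq1 : r^-1^-1 + (1 - r)^-1^-1 = 1 by rewrite !invrK addrC subrK.
have := conjugate_powR (powR_ge0 t r) ler01 _ _ pq1.
rewrite mulr1 powR1 -powRrM mulfV ?gt_eqF // powRr1 // !invrK !invr_gt0 mulrC.
by move=> /(_ r_gt0 r1); rewrite mul1r.
Qed.

Lemma jensen_powR (I : finType) (l a : I -> R) :
  (forall i, 0 <= l i) -> (forall i, 0 <= a i) -> \sum_i l i <= 1 ->
  \sum_i l i * a i `^ r <= (\sum_i l i * a i) `^ r.
Proof.
move=> l0 a0 l1; set m := \sum_i l i * a i.
have la0 i : 0 <= l i * a i by rewrite mulr_ge0.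
have [m0|m_neq0] := eqVneq m 0.
  rewrite m0 powR0 ?gt_eqF // big1 // => i _.
  have /eqP : l i * a i = 0 by apply: (psumr_eq0P (fun i _ => la0 i) m0).
  rewrite mulf_eq0 => /orP[/eqP-> | /eqP->]; first by rewrite mul0r.
  by rewrite powR0 ?mulr0 // gt_eqF.
have m_gt0 : 0 < m by rewrite lt_def m_neq0 sumr_ge0.
have tangent i : l i * a i `^ r <= l i * m `^ r * (r * (a i / m) + (1 - r)).
  have am0 : 0 <= a i / m by rewrite divr_ge0 // ltW.
  rewrite -[X in _ * X `^ r <= _](divfK m_neq0) powRM ?(ltW m_gt0) //.
  rewrite mulrCA mulrC; apply: ler_wpM2l; last exact: powR_le_tangent.
  by rewrite mulr_ge0 ?powR_ge0.
apply: le_trans (ler_sum _ (fun i _ => tangent i)) _.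
rewrite (eq_bigr (fun i => m `^ r * (r / m) * (l i * a i) + m `^ r * (1 - r) * l i));
  last by move=> i _; ring.
rewrite big_split /= -!mulr_sumr -/m -mulrA divfK //.
have r1 : 0 <= 1 - r by rewrite subr_ge0 ltW.
have l1' : 0 <= 1 - \sum_i l i by rewrite subr_ge0.
have := mulr_ge0 (mulr_ge0 (powR_ge0 m r) r1) l1'.
nra.
Qed.

Lemma jensen_sum_powR (D J : finType) (c : D -> R) (l : J -> R) (w : J -> D -> R) :
  (forall i, 0 <= c i) -> (forall j, 0 <= l j) -> (forall j i, 0 <= w j i) ->
  \sum_j l j <= 1 ->
  \sum_j l j * \sum_i c i * w j i `^ r <= \sum_i c i * (\sum_j l j * w j i) `^ r.
Proof.
move=> c0 l0 w0 l1; under eq_bigr do rewrite mulr_sumr.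
rewrite exchange_big /=; apply: ler_sum => i _.
under eq_bigr do rewrite mulrCA; rewrite -mulr_sumr.
exact: (ler_wpM2l (c0 i) (jensen_powR l0 (fun j => w0 j i) l1)).
Qed.

Lemma sum_powR_scale (D : finType) (c w : D -> R) (t : R) :
  0 <= t -> (forall i, 0 <= w i) ->
  \sum_i c i * (t * w i) `^ r = t `^ r * \sum_i c i * w i `^ r.
Proof.
by move=> t0 w0; rewrite mulr_sumr; apply: eq_bigr => i _; rewrite powRM // mulrCA.
Qed.

Lemma powR_cone_le (D J : finType) (c : D -> R) (K : R) (u : J -> D -> R)
    (mu : J -> R) (v : D -> R) :
  (forall i, 0 <= c i) -> (forall j i, 0 <= u j i) -> (forall j, 0 <= mu j) ->
  (forall i, v i = \sum_j mu j * u j i) ->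
  (forall j, K * (\sum_i u j i) `^ r <= \sum_i c i * u j i `^ r) ->
  K * (\sum_i v i) `^ r <= \sum_i c i * v i `^ r.
Proof.
move=> c0 u0 mu0 hv hK; set S := \sum_i v i; pose s j := \sum_i u j i.
have s_ge0 j : 0 <= s j := sumr_ge0 _ (fun i _ => u0 j i).
have S_eq : S = \sum_j mu j * s j.
  rewrite /S (eq_bigr _ (fun i _ => hv i)) exchange_big.
  by apply: eq_bigr => j _; rewrite mulr_sumr.
have S_ge0 : 0 <= S by rewrite S_eq sumr_ge0 // => j _; exact: mulr_ge0.
have [S0|S_neq0] := eqVneq S 0.
  rewrite S0 powR0 ?gt_eqF // mulr0 sumr_ge0 // => i _.
  exact: mulr_ge0 (c0 i) (powR_ge0 _ _).
pose l j := mu j * s j / S.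
have l0 j : 0 <= l j := divr_ge0 (mulr_ge0 (mu0 j) (s_ge0 j)) S_ge0.
have l1 : \sum_j l j = 1 by rewrite /l -mulr_suml -S_eq divff.
have w0 j i : 0 <= S / s j * u j i := mulr_ge0 (divr_ge0 S_ge0 (s_ge0 j)) (u0 j i).
have v_eq i : v i = \sum_j l j * (S / s j * u j i).
  rewrite hv; apply: eq_bigr => j _; have [s0|s_neq0] := eqVneq (s j) 0.
    have -> : u j i = 0 by apply: (psumr_eq0P (fun i _ => u0 j i) s0).
    by rewrite /l s0 !(mulr0, mul0r).
  by rewrite /l; field; rewrite S_neq0 s_neq0.
have scaled j : l j * (K * S `^ r) <= l j * \sum_i c i * (S / s j * u j i) `^ r.
  have [s0|s_neq0] := eqVneq (s j) 0; first by rewrite /l s0 !(mulr0, mul0r).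
  have -> : S `^ r = (S / s j) `^ r * s j `^ r.
    by rewrite -powRM ?(divfK s_neq0) ?divr_ge0.
  rewrite sum_powR_scale ?divr_ge0 // [K * _]mulrCA.
  exact: (ler_wpM2l (l0 j) (ler_wpM2l (powR_ge0 _ _) (hK j))).
under [X in _ <= X]eq_bigr do rewrite v_eq.
have l_le1 : \sum_j l j <= 1 by rewrite l1.
apply: le_trans (jensen_sum_powR (w := fun j i => S / s j * u j i) c0 l0 w0 l_le1).
by apply: le_trans (ler_sum _ (fun j _ => scaled j)); rewrite -mulr_suml l1 mul1r.
Qed.

End ConcavePower.

Section ConeInstances.
Variables (R : realType) (r : R).
Hypotheses (r_gt0 : 0 < r) (r_lt1 : r < 1).

Let powR1r : 1 `^ r = 1. Proof. by rewrite powR1. Qed.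
Let powR0r : 0 `^ r = 0. Proof. exact: powR0 (lt0r_neq0 r_gt0). Qed.
Let cone := powR_cone_le r_gt0 r_lt1.

Ltac cone_simpl :=
  rewrite ?big_ord_recr ?big_ord0 /=
    ?(add0r, addr0, mul0r, mulr0, mul1r, mulr1, powR1r, powR0r, lexx).

Lemma powR_sum3_le_sum2 (a b X Y Z : R) : 0 <= a -> 0 <= b ->
  (a + b + 1) `^ r <= a `^ r + b `^ r ->
  0 <= Z -> a * Z <= X -> b * Z <= Y -> (X + Y + Z) `^ r <= X `^ r + Y `^ r.
Proof.
move=> a0 b0 hab Z0 hX hY.
have := cone (c := fun i : 'I_3 => [:: 1; 1; 0]`_i) (K := 1)
  (u := fun j i : 'I_3 => (nth [::] [:: [:: 1; 0; 0]; [:: 0; 1; 0]; [:: a; b; 1]] j)`_i)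
  (mu := fun j : 'I_3 => [:: X - a * Z; Y - b * Z; Z]`_j) (v := fun i => [:: X; Y; Z]`_i).
cone_simpl; apply.
- by move=> [[|[|[|//]]] ?] /=; rewrite ?(lexx, ler01).
- by move=> [[|[|[|//]]] ?] [[|[|[|//]]] ?] /=; rewrite ?(lexx, ler01).
- by move=> [[|[|[|//]]] ?] /=; rewrite ?subr_ge0.
- by move=> [[|[|[|//]]] ?]; cone_simpl; ring.
- by move=> [[|[|[|//]]] ?]; cone_simpl.
Qed.

Lemma powR_sum2_le_wsum2 (c k X Y : R) : 0 <= c -> 0 < k ->
  (k + 1) `^ r <= c * k `^ r + 1 ->
  0 <= X -> X <= k * Y -> (X + Y) `^ r <= c * X `^ r + Y `^ r.
Proof.
move=> c0 k0 hk X0 hX; have k_neq0 := lt0r_neq0 k0.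
have Xk0 : 0 <= X / k by rewrite divr_ge0 // ltW.
have XkY : X / k <= Y by rewrite ler_pdivrMr // mulrC.
have := cone (c := fun i : 'I_2 => [:: c; 1]`_i) (K := 1)
  (u := fun j i : 'I_2 => (nth [::] [:: [:: 0; 1]; [:: k; 1]] j)`_i)
  (mu := fun j : 'I_2 => [:: Y - X / k; X / k]`_j) (v := fun i => [:: X; Y]`_i).
cone_simpl; apply.
- by move=> [[|[|//]] ?] /=; rewrite ?(lexx, ler01).
- by move=> [[|[|//]] ?] [[|[|//]] ?] /=; rewrite ?(lexx, ler01) // ltW.
- by move=> [[|[|//]] ?] /=; rewrite ?subr_ge0.
- by move=> [[|[|//]] ?]; cone_simpl; rewrite ?divfK //; ring.
- by move=> [[|[|//]] ?]; cone_simpl.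
Qed.

Lemma scaled_powR_sum2_le_sum2 (K p k X Y : R) : 0 <= p -> p < k ->
  K * (p + 1) `^ r <= p `^ r + 1 -> K * (k + 1) `^ r <= k `^ r + 1 ->
  p * Y <= X -> X <= k * Y -> K * (X + Y) `^ r <= X `^ r + Y `^ r.
Proof.
move=> p0 pk hp hk hpX hXk; have kp0 : 0 < k - p by rewrite subr_gt0.
have kp_neq0 := lt0r_neq0 kp0.
have := cone (c := fun i : 'I_2 => [:: 1; 1]`_i) (K := K)
  (u := fun j i : 'I_2 => (nth [::] [:: [:: p; 1]; [:: k; 1]] j)`_i)
  (mu := fun j : 'I_2 => [:: (k * Y - X) / (k - p); (X - p * Y) / (k - p)]`_j)
  (v := fun i => [:: X; Y]`_i).
cone_simpl; apply.
- by move=> [[|[|//]] ?] /=; rewrite ler01.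
- by move=> [[|[|//]] ?] [[|[|//]] ?] /=; rewrite ?ler01 // ltW // (le_lt_trans p0).
- by move=> [[|[|//]] ?] /=; rewrite divr_ge0 ?subr_ge0 // ltW.
- by move=> [[|[|//]] ?]; cone_simpl; field.
- by move=> [[|[|//]] ?]; cone_simpl.
Qed.

Lemma powR_sum5_le_wsum4 (c g z0 e T W X Y Z : R) :
  0 <= c -> 0 <= g -> 0 <= z0 -> z0 < e * (3 / 2 + 2 * g) ->
  (3 / 2 + 2 * g + z0) `^ r <= 2^-1 `^ r + 2 * g `^ r + c * z0 `^ r ->
  ((1 + e) * (3 / 2 + 2 * g)) `^ r <=
    2^-1 `^ r + 2 * g `^ r + c * (e * (3 / 2 + 2 * g)) `^ r ->
  (1 + e) `^ r <= 1 + c * e `^ r ->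
  0 < T -> T / 2 <= W -> g * T <= X -> g * T <= Y -> z0 * T <= Z ->
  Z <= e * (T + W + X + Y) ->
  (T + W + X + Y + Z) `^ r <= W `^ r + X `^ r + Y `^ r + c * Z `^ r.
Proof.
move=> c0 g0 z00 z0e h0 h1 he T0 hW hX hY hZ hZe.
have eB0 : 0 < e * (3 / 2 + 2 * g) := le_lt_trans z00 z0e.
have e0 : 0 < e by move: eB0; rewrite pmulr_lgt0 //; lra.
have T_ge0 := ltW T0.
have [t [t0 t1 tZ]] : exists t, [/\ 0 <= t, t <= 1 &
    Z = z0 * T + t * (e * (T + W + X + Y) - z0 * T)].
  have Q_gt0 : 0 < e * (T + W + X + Y) - z0 * T.
    have : e * (T + T / 2 + g * T + g * T) <= e * (T + W + X + Y).
      by apply: ler_wpM2l; lra.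
    have : 0 < (e * (3 / 2 + 2 * g) - z0) * T by apply: mulr_gt0; lra.
    lra.
  exists ((Z - z0 * T) / (e * (T + W + X + Y) - z0 * T)); split.
  - by apply: divr_ge0; lra.
  - by rewrite ler_pdivrMr // mul1r; lra.
  - by rewrite divfK ?lt0r_neq0 //; ring.
(* The cone is spanned by the two rays over T = 1 on which Z is minimal or
   maximal, and by the W, X and Y directions with or without an extra e in the
   Z coordinate; t is the relative position of Z between its two bounds. *)
have := cone (c := fun i : 'I_5 => [:: 0; 1; 1; 1; c]`_i) (K := 1)
  (u := fun (j : 'I_8) (i : 'I_5) => (nth [::] [:: [:: 1; 2^-1; g; g; z0];
          [:: 1; 2^-1; g; g; e * (3 / 2 + 2 * g)];
          [:: 0; 1; 0; 0; 0]; [:: 0; 1; 0; 0; e]; [:: 0; 0; 1; 0; 0];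
          [:: 0; 0; 1; 0; e]; [:: 0; 0; 0; 1; 0]; [:: 0; 0; 0; 1; e]] j)`_i)
  (mu := fun j : 'I_8 => [:: (1 - t) * T; t * T; (1 - t) * (W - T / 2);
          t * (W - T / 2); (1 - t) * (X - g * T); t * (X - g * T);
          (1 - t) * (Y - g * T); t * (Y - g * T)]`_j)
  (v := fun i => [:: T; W; X; Y; Z]`_i).
cone_simpl; apply.
- by move=> [[|[|[|[|[|//]]]]] ?] /=; rewrite ?(lexx, ler01).
- by move=> [[|[|[|[|[|[|[|[|//]]]]]]]] ?] [[|[|[|[|[|//]]]]] ?] /=;
    rewrite ?(lexx, ler01, invr_ge0, ler0n) // ltW.
- by move=> [[|[|[|[|[|[|[|[|//]]]]]]]] ?] /=; rewrite mulr_ge0 ?subr_ge0.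
- by move=> [[|[|[|[|[|//]]]]] ?]; cone_simpl; rewrite ?tZ; field.
- move=> [[|[|[|[|[|[|[|[|//]]]]]]]] ?]; cone_simpl => //.
  + have -> : 1 + 2^-1 + g + g + z0 = 3 / 2 + 2 * g + z0 by field.
    by rewrite -[_ + g `^ r + g `^ r]addrA -mulr2n -(mulr_natl (g `^ r)).
  + have -> : 1 + 2^-1 + g + g + e * (3 / 2 + 2 * g) = (1 + e) * (3 / 2 + 2 * g).
      by field.
    by rewrite -[_ + g `^ r + g `^ r]addrA -mulr2n -(mulr_natl (g `^ r)).
Qed.

Lemma wpowR_sum4_le_wsum3 (c W X Y Z : R) : 0 <= c <= 1 ->
  c * 4 `^ r <= c + 2 ->
  0 <= W -> W <= X -> W <= Y -> W <= Z ->
  c * (W + X + Y + Z) `^ r <= c * X `^ r + Y `^ r + Z `^ r.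
Proof.
move=> /andP[c0 c1] h4 W0 hX hY hZ.
have := cone (c := fun i : 'I_4 => [:: 0; c; 1; 1]`_i) (K := c)
  (u := fun j i : 'I_4 => (nth [::] [:: [:: 1; 1; 1; 1]; [:: 0; 1; 0; 0];
                                        [:: 0; 0; 1; 0]; [:: 0; 0; 0; 1]] j)`_i)
  (mu := fun j : 'I_4 => [:: W; X - W; Y - W; Z - W]`_j)
  (v := fun i => [:: W; X; Y; Z]`_i).
cone_simpl; apply.
- by move=> [[|[|[|[|//]]]] ?] /=; rewrite ?(lexx, ler01).
- by move=> [[|[|[|[|//]]]] ?] [[|[|[|[|//]]]] ?] /=; rewrite ?(lexx, ler01).
- by move=> [[|[|[|[|//]]]] ?] /=; rewrite ?subr_ge0.
- by move=> [[|[|[|[|//]]]] ?]; cone_simpl; ring.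
- move=> [[|[|[|[|//]]]] ?]; cone_simpl => //.
  have -> : 1 + 1 + 1 + 1 = 4 :> R by ring.
  by rewrite -addrA.
Qed.

Lemma wpowR_sum3_le_wsum2 (c X Y Z : R) : 0 <= c <= 1 ->
  c * 8 `^ r <= c * 6 `^ r + 1 ->
  0 <= Z -> 6 * Z <= X -> Z <= Y -> c * (X + Y + Z) `^ r <= c * X `^ r + Y `^ r.
Proof.
move=> /andP[c0 c1] h8 Z0 hX hY.
have := cone (c := fun i : 'I_3 => [:: c; 1; 0]`_i) (K := c)
  (u := fun j i : 'I_3 => (nth [::] [:: [:: 1; 0; 0]; [:: 0; 1; 0]; [:: 6; 1; 1]] j)`_i)
  (mu := fun j : 'I_3 => [:: X - 6 * Z; Y - Z; Z]`_j) (v := fun i => [:: X; Y; Z]`_i).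
cone_simpl; apply.
- by move=> [[|[|[|//]]] ?] /=; rewrite ?(lexx, ler01).
- by move=> [[|[|[|//]]] ?] [[|[|[|//]]] ?] /=; rewrite ?(lexx, ler01, ler0n).
- by move=> [[|[|[|//]]] ?] /=; rewrite ?subr_ge0.
- by move=> [[|[|[|//]]] ?]; cone_simpl; ring.
- move=> [[|[|[|//]]] ?]; cone_simpl => //.
  by have -> : 6 + 1 + 1 = 8 :> R by ring.
Qed.

End ConeInstances.

Section RationalPower.
Variable R : realType.

Lemma powR_ratio_root (p q : nat) (a : R) : (0 < q)%N -> 0 <= a ->
  exists2 b, 0 <= b & b ^+ q = a /\ a `^ (p%:R / q%:R) = b ^+ p.
Proof.
move=> q0 a0; exists (a `^ q%:R^-1); first exact: powR_ge0.
rewrite -!powR_mulrn ?powR_ge0 // -!powRrM mulVf ?powRr1 ?pnatr_eq0 -?lt0n //.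
by rewrite mulrC.
Qed.

Lemma le_powR_ratio (p q : nat) (l a : R) : (0 < q)%N -> 0 <= l -> 0 <= a ->
  l ^+ q <= a ^+ p -> l <= a `^ (p%:R / q%:R).
Proof.
move=> q0 l0 a0 h; have [b b0 [bq ->]] := powR_ratio_root p q0 a0.
by rewrite -(ler_pXn2r q0) ?nnegrE ?exprn_ge0 // -exprM mulnC exprM bq.
Qed.

Lemma powR_ratio_le (p q : nat) (u a : R) : (0 < q)%N -> 0 <= u -> 0 <= a ->
  a ^+ p <= u ^+ q -> a `^ (p%:R / q%:R) <= u.
Proof.
move=> q0 u0 a0 h; have [b b0 [bq ->]] := powR_ratio_root p q0 a0.
by rewrite -(ler_pXn2r q0) ?nnegrE ?exprn_ge0 // -exprM mulnC exprM bq.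
Qed.

End RationalPower.

Section FourFifths.
Variable R : realType.
Local Notation r := (rexp R).
Local Notation c := (cconst R).
Local Notation dec6 m := (m%:R / 1000000%:R : R).

Ltac powR_lb := rewrite /rexp /dec3; apply: le_powR_ratio; [by [] | lra..].
Ltac powR_ub := rewrite /rexp /dec3; apply: powR_ratio_le; [by [] | lra..].

Lemma rexp_gt0 : 0 < r. Proof. by rewrite /rexp; lra. Qed.
Lemma rexp_lt1 : r < 1. Proof. by rewrite /rexp; lra. Qed.

Lemma dec3_ge0 (m : nat) : 0 <= dec3 R m.
Proof. by rewrite /dec3 divr_ge0 ?ler0n. Qed.

Lemma powR_8_sub_6 : dec6 1085068 <= 8 `^ r - 6 `^ r <= dec6 1085070.
Proof.
have l8 : dec6 5278031 <= 8 `^ r by powR_lb.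
have u8 : 8 `^ r <= dec6 5278032 by powR_ub.
have l6 : dec6 4192962 <= 6 `^ r by powR_lb.
have u6 : 6 `^ r <= dec6 4192963 by powR_ub.
by apply/andP; split; lra.
Qed.

Lemma cconst_bounds : 92159%:R / 100000%:R <= c <= 93%:R / 100%:R.
Proof.
have /andP[lD uD] := powR_8_sub_6.
have D0 : 0 < 8 `^ r - 6 `^ r by lra.
by rewrite /cconst ler_pdivlMr // ler_pdivrMr //; apply/andP; split; lra.
Qed.

Lemma cconst_eq : c * 8 `^ r = c * 6 `^ r + 1.
Proof.
have /andP[lD _] := powR_8_sub_6.
have D0 : 8 `^ r - 6 `^ r != 0 by apply: lt0r_neq0; lra.
by rewrite /cconst; field.
Qed.

Lemma vertex_i :
  (dec3 R 8956 + dec3 R 1036 + 1) `^ r <= dec3 R 8956 `^ r + dec3 R 1036 `^ r.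
Proof.
have ha : dec6 5776852 <= dec3 R 8956 `^ r by powR_lb.
have hb : dec6 1028697 <= dec3 R 1036 `^ r by powR_lb.
have hs : (dec3 R 8956 + dec3 R 1036 + 1) `^ r <= dec6 6805521 by powR_ub.
lra.
Qed.

Lemma vertex_ii : (dec3 R 10174 + 1) `^ r <= c * dec3 R 10174 `^ r + 1.
Proof.
have /andP[hc _] := cconst_bounds.
have hk : dec6 6397250 <= dec3 R 10174 `^ r by powR_lb.
have hs : (dec3 R 10174 + 1) `^ r <= dec6 6895519 by powR_ub.
nra.
Qed.

Local Notation K := ((1 + 1 / dec3 R 10174) `^ r).

Lemma vertex_iii_500 : K * (dec3 R 500 + 1) `^ r <= dec3 R 500 `^ r + 1.
Proof.
have hK : K <= dec6 1077888 by powR_ub.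
have hp : dec6 574349 <= dec3 R 500 `^ r by powR_lb.
have hs : (dec3 R 500 + 1) `^ r <= dec6 1383162 by powR_ub.
have := powR_ge0 (1 + 1 / dec3 R 10174) r; have := powR_ge0 (dec3 R 500 + 1) r.
nra.
Qed.

Lemma vertex_iii_8884 : K * (dec3 R 8884 + 1) `^ r <= dec3 R 8884 `^ r + 1.
Proof.
have hK : K <= dec6 1077888 by powR_ub.
have hp : dec6 5739668 <= dec3 R 8884 `^ r by powR_lb.
have hs : (dec3 R 8884 + 1) `^ r <= dec6 6250953 by powR_ub.
have := powR_ge0 (1 + 1 / dec3 R 10174) r; have := powR_ge0 (dec3 R 8884 + 1) r.
nra.
Qed.

Local Notation g := (dec3 R 2072)^-1.
Local Notation z0 := (dec3 R 5884 / dec3 R 2072).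
Local Notation e := (dec3 R 1980).

Lemma vertex_iv_parameters : [/\ 0 <= g, 0 <= z0 & z0 < e * (3 / 2 + 2 * g)].
Proof. by rewrite /dec3; split; lra. Qed.

Lemma vertex_iv_base :
  (3 / 2 + 2 * g + z0) `^ r <= 2^-1 `^ r + 2 * g `^ r + c * z0 `^ r.
Proof.
have /andP[hc _] := cconst_bounds.
have h2 : dec6 574349 <= 2^-1 `^ r by powR_lb.
have hg : dec6 558326 <= g `^ r by powR_lb.
have hz : dec6 2304763 <= z0 `^ r by powR_lb.
have hs : (3 / 2 + 2 * g + z0) `^ r <= dec6 3799703 by powR_ub.
nra.
Qed.

Lemma vertex_iv_top : ((1 + e) * (3 / 2 + 2 * g)) `^ r <=
  2^-1 `^ r + 2 * g `^ r + c * (e * (3 / 2 + 2 * g)) `^ r.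
Proof.
have /andP[hc _] := cconst_bounds.
have h2 : dec6 574349 <= 2^-1 `^ r by powR_lb.
have hg : dec6 558326 <= g `^ r by powR_lb.
have hz : dec6 3554848 <= (e * (3 / 2 + 2 * g)) `^ r by powR_lb.
have hs : ((1 + e) * (3 / 2 + 2 * g)) `^ r <= dec6 4930171 by powR_ub.
nra.
Qed.

Lemma vertex_iv_unit : (1 + e) `^ r <= 1 + c * e `^ r.
Proof.
have /andP[hc _] := cconst_bounds.
have he : dec6 1727158 <= e `^ r by powR_lb.
have hs : (1 + e) `^ r <= dec6 2395373 by powR_ub.
nra.
Qed.

Lemma vertex_v : c * 4 `^ r <= c + 2.
Proof.
have /andP[hc hc'] := cconst_bounds.
have h4 : 4 `^ r <= dec6 3031434 by powR_ub.
have := powR_ge0 4 r.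
nra.
Qed.

Lemma dec3_min_bounds (T W X Y Z : R) :
  T <= dec3 R 2072 * Num.min (W / dec3 R 1036) (Num.min X (Num.min Y (Z / dec3 R 5884))) ->
  [/\ T / 2 <= W, g * T <= X, g * T <= Y & z0 * T <= Z].
Proof.
have k0 : 0 < dec3 R 2072 by rewrite /dec3; lra.
rewrite -ler_pdivrMl // !le_min => /and4P[hW hX hY hZ].
rewrite /dec3 in k0 hW hX hY hZ *; split; lra.
Qed.

End FourFifths.

Theorem lemma2p4 (R : realType) (t w x y z : nat) :
  let r := rexp R in
  let c := cconst R in
  let T := (t%:R : R) in let W := (w%:R : R) in let X := (x%:R : R) in
  let Y := (y%:R : R) in let Z := (z%:R : R) in
  (* (i) *)
  (X >= dec3 R 8956 * Z -> Y >= dec3 R 1036 * Z ->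
     X `^ r + Y `^ r >= (X + Y + Z) `^ r) /\
  (* (ii) *)
  (X <= dec3 R 10174 * Y -> c * X `^ r + Y `^ r >= (X + Y) `^ r) /\
  (* (iii) *)
  (dec3 R 500 * Y <= X -> X <= dec3 R 8884 * Y ->
     X `^ r + Y `^ r >= (1 + 1 / dec3 R 10174) `^ r * (X + Y) `^ r) /\
  (* (iv) *)
  (Z < dec3 R 1980 * (T + W + X + Y) ->
   0 < T ->
   T <= dec3 R 2072 * Num.min (W / dec3 R 1036)
                        (Num.min X (Num.min Y (Z / dec3 R 5884))) ->
     W `^ r + X `^ r + Y `^ r + c * Z `^ r >= (T + W + X + Y + Z) `^ r) /\
  (* (v) *)
  ((w <= minn x (minn y z))%N ->
     c * X `^ r + Y `^ r + Z `^ r >= c * (W + X + Y + Z) `^ r) /\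
  (* (vi) *)
  ((x >= 6 * z)%N -> (y >= z)%N ->
     c * X `^ r + Y `^ r >= c * (X + Y + Z) `^ r).
Proof.
move=> r c T W X Y Z; rewrite {}/r {}/c.
have [W0 X0 Z0] : [/\ 0 <= W, 0 <= X & 0 <= Z] by split; apply: ler0n.
have /andP[c_lo c_hi] := cconst_bounds R.
have c0 : 0 <= cconst R by lra.
have c01 : 0 <= cconst R <= 1 by apply/andP; split; lra.
have r0 := rexp_gt0 R; have r1 := rexp_lt1 R.
split; [|split; [|split; [|split; [|split]]]].
- move=> hX hY.
  exact (powR_sum3_le_sum2 r0 r1 (dec3_ge0 R 8956) (dec3_ge0 R 1036) (vertex_i R) Z0 hX hY).
- move=> hXY; apply: (powR_sum2_le_wsum2 r0 r1 c0 _ (vertex_ii R) X0 hXY).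
  by rewrite /dec3; lra.
- move=> hpX hXk; apply: (scaled_powR_sum2_le_sum2 r0 r1 (dec3_ge0 R 500) _
    (vertex_iii_500 R) (vertex_iii_8884 R) hpX hXk).
  by rewrite /dec3; lra.
- move=> hZ T_gt0 /dec3_min_bounds[hW hX hY hZ0].
  have [g0 z00 z0e] := vertex_iv_parameters R.
  exact (powR_sum5_le_wsum4 r0 r1 c0 g0 z00 z0e (vertex_iv_base R) (vertex_iv_top R)
    (vertex_iv_unit R) T_gt0 hW hX hY hZ0 (ltW hZ)).
- rewrite !leq_min => /and3P[hx hy hz].
  by apply: (wpowR_sum4_le_wsum3 r0 r1 c01 (vertex_v R) W0); rewrite ler_nat.
- move=> h6 hzy; apply: (wpowR_sum3_le_wsum2 r0 r1 c01 _ Z0).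
  + by rewrite cconst_eq.
  + by rewrite -natrM ler_nat.
  + by rewrite ler_nat.
Qed.
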